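(* For every $x\in\mathbb T^3\setminus\mathfrak I$, the collisional invariant region $\mathcal S(x)$ is Lebesgue measurable.
   Context: $\mathbb{T}^3=\mathbb{R}^3/\mathbb{Z}^3$; $\omega(k)=\omega_0+\sum_{j=1}^3 2(1-\cos(2\pi k^j))$ with fixed $2<\omega_0<3$. Two wave vectors $x,y\in\mathbb{T}^3$ are connected by one collision if $\omega(y)=\omega(x)+\omega(y-x)$, or $\omega(x)=\omega(y)+\omega(x-y)$, or $\omega(x+y)=\omega(x)+\omega(y)$. The no-collision region $\mathfrak I$ is the set of $x\in\mathbb T^3$ such that no $y\in\mathbb T^3$ is connected to $x$ by one collision. For $x\in\mathbb T^3\setminus\mathfrak I$: $\mathcal S^1(x)$ is the set of $y$ connected to $x$ by one collision, $\mathcal S^n(x)=\bigcup_{z\in\mathcal S^{n-1}(x)}\mathcal S^1(z)$ for $n\ge2$, and $\mathcal S(x)=\bigcup_{n\ge1}\mathcal S^n(x)$. *)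

From HB Require Import structures.
From mathcomp Require Import all_boot all_order all_algebra.
From mathcomp Require Import all_classical all_reals all_analysis.
Set Implicit Arguments. Unset Strict Implicit. Unset Printing Implicit Defensive.
Import Order.TTheory GRing.Theory Num.Theory.
Local Open Scope classical_set_scope.
Local Open Scope ring_scope.

(* Points of R^3 are triples ((k1, k2), k3).  The torus T^3 = R^3/Z^3 is
   represented through Z^3-periodic objects on R^3. *)
Definition vec (R : realType) := ((R * R) * R)%type.

Section Defs.
Variable R : realType.

Definition vadd (x y : vec R) : vec R :=
  ((x.1.1 + y.1.1, x.1.2 + y.1.2), x.2 + y.2).
Definition vsub (x y : vec R) : vec R :=
  ((x.1.1 - y.1.1, x.1.2 - y.1.2), x.2 - y.2).

Definition omega (w0 : R) (k : vec R) : R :=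
  w0 + 2 * (1 - cos (2 * pi * k.1.1)) + 2 * (1 - cos (2 * pi * k.1.2))
     + 2 * (1 - cos (2 * pi * k.2)).

Definition connected1 (w0 : R) (x y : vec R) : Prop :=
  omega w0 y = omega w0 x + omega w0 (vsub y x) \/
  omega w0 x = omega w0 y + omega w0 (vsub x y) \/
  omega w0 (vadd x y) = omega w0 x + omega w0 y.

Definition noCollision (w0 : R) : set (vec R) :=
  [set x | forall y, ~ connected1 w0 x y].

Definition S1 (w0 : R) (x : vec R) : set (vec R) := [set y | connected1 w0 x y].

(* Sn w0 x n = S^{n+1}(x) *)
Fixpoint Sn (w0 : R) (x : vec R) (n : nat) : set (vec R) :=
  match n with
  | O => S1 w0 x
  | S m => \bigcup_(z in Sn w0 x m) S1 w0 z
  end.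

Definition Sinv (w0 : R) (x : vec R) : set (vec R) := \bigcup_n Sn w0 x n.

(* Lebesgue measure on R^3 as the product of three copies of the
   Lebesgue measure on R (defined on the Borel/product sigma-algebra). *)
Definition lebesgue3 : set (vec R) -> \bar R :=
  ((@lebesgue_measure R \x @lebesgue_measure R) \x @lebesgue_measure R)%E.

(* Lebesgue measurable = measurable for the completion of lebesgue3:
   differs from a Borel set by a lebesgue3-negligible set. *)
Definition lebesgue_measurable3 (A : set (vec R)) : Prop :=
  exists B : set (vec R), measurable B /\
    lebesgue3.-negligible ((A `\` B) `|` (B `\` A)).

End Defs.

From Pilot Require Import Defs.
From HB Require Import structures.
From mathcomp Require Import all_boot all_order all_algebra.
From mathcomp Require Import all_classical all_reals all_analysis.
From mathcomp Require Import ring lra.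
Import Order.TTheory GRing.Theory Num.Theory.
Import numFieldNormedType.Exports.
Local Open Scope classical_set_scope.
Local Open Scope ring_scope.

(* We show that S(x) is even a Borel set, for every x.
   - The collision relation is a union of three level sets of continuous
     functions of (x, y), hence closed.  So S^1(x) is closed.
   - omega is Z^3-periodic, hence so is the collision relation in each
     argument and every S^n(x) is invariant under integer translations.
   - S^{n+1}(x) is the image under the second projection of the pairs
     (z, y) with z in S^n(x) and y connected to z; by periodicity z may be
     taken in the cube [-1,1]^3.  By induction, the trace of S^n(x) on every
     cube [-k,k]^3 is compact, as a projection of a compact set.
   - Compact sets of R^3 are closed, and closed sets are measurable for the
     product sigma-algebra (open sets are countable unions of rational
     boxes).  So S(x), a countable union of such traces, is measurable, and
     it is Lebesgue measurable with itself as Borel approximation. *)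

Section CollisionRegion.
Variable R : realType.

(* vec R unfolded, so that its topological and additive structures are
   found by inference.  Defs.connected1 is written qualified because the
   library also has a lemma named connected1. *)
Local Notation V := ((R * R) * R)%type.

Lemma rat_approx (p e : R) : 0 < e -> exists a b : rat,
  p - e < ratr a < p /\ p < ratr b < p + e.
Proof.
move=> e0.
have [a /itvP ha] := @rat_in_itvoo R (p - e) p ltac:(rewrite ltrBlDr ltrDl //).
have [b /itvP hb] := @rat_in_itvoo R p (p + e) ltac:(rewrite ltrDl //).
by exists a, b; rewrite !ha !hb.
Qed.

Definition ratbox (q : ((rat * rat) * (rat * rat)) * (rat * rat)) : set V :=
  (`]ratr q.1.1.1, ratr q.1.1.2[ `*` `]ratr q.1.2.1, ratr q.1.2.2[) `*`
   `]ratr q.2.1, ratr q.2.2[.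

(* Open sets of R^3 are measurable: they are countable unions of the
   rational boxes they contain. *)
Lemma open_measurable3 (U : set V) : open U -> measurable U.
Proof.
move=> oU.
have -> : U = \bigcup_q (if `[< ratbox q `<=` U >] then ratbox q else set0).
  apply/seteqP; split; last by move=> y [q _]; case: ifPn => // /asboolP; apply.
  move=> p Up.
  move: oU; rewrite openE => /(_ _ Up) /nbhs_ballP [e /= e0 ballU].
  have [a1 [b1 [/andP[? ?] /andP[? ?]]]] := @rat_approx p.1.1 e e0.
  have [a2 [b2 [/andP[? ?] /andP[? ?]]]] := @rat_approx p.1.2 e e0.
  have [a3 [b3 [/andP[? ?] /andP[? ?]]]] := @rat_approx p.2 e e0.
  exists (((a1, b1), (a2, b2)), (a3, b3)) => //.
  have -> : `[< ratbox (((a1, b1), (a2, b2)), (a3, b3)) `<=` U >].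
    apply/asboolP => y [[/= +] +]; rewrite /= !in_itv /=.
    move=> /andP[? ?] /andP[? ?] /andP[? ?]; apply: ballU.
    by split; [split|]; rewrite /ball /= ltr_norml; apply/andP; split; lra.
  by rewrite /ratbox /= !in_itv /=; split; [split|]; apply/andP.
apply: countable_bigcupT_measurable; first exact: countableP.
move=> q; case: ifPn => // _.
by apply: measurableX; first apply: measurableX; exact: measurable_itv.
Qed.

Lemma closed_measurable3 (A : set V) : closed A -> measurable A.
Proof.
by move=> /closed_openC/open_measurable3/measurableC; rewrite setCK.
Qed.

Lemma fst_continuous (A B : topologicalType) : continuous (@fst A B).
Proof. by move=> p; exact: cvg_fst. Qed.

Lemma snd_continuous (A B : topologicalType) : continuous (@snd A B).
Proof. by move=> p; exact: cvg_snd. Qed.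

Definition omega_term (t : R) : R := 2 * (1 - cos (2 * pi * t)).

Lemma omega_term_continuous : continuous omega_term.
Proof.
move=> t.
have -> : omega_term = cst 2 \* (cst 1 - cos \o ( *%R (2 * pi))) by [].
apply: continuousM; first exact: cst_continuous.
apply: continuousB; first exact: cst_continuous.
apply: continuous_comp; last exact: continuous_cos.
by apply: continuousM; [exact: cst_continuous | exact: cvg_id].
Qed.

Lemma omega_continuous (w0 : R) : continuous (omega w0 : V -> R).
Proof.
move=> p.
have term (f : V -> R) : continuous f -> {for p, continuous (omega_term \o f)}.
  by move=> fc; apply: continuous_comp;
    [exact: fc | exact: omega_term_continuous].
have proj11 : continuous (fun k : V => k.1.1).
  by move=> q; apply: continuous_comp; exact: fst_continuous.
have proj12 : continuous (fun k : V => k.1.2).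
  by move=> q; apply: continuous_comp;
    [exact: fst_continuous | exact: snd_continuous].
have -> : (omega w0 : V -> R) = cst w0 + (omega_term \o (fun k : V => k.1.1))
   + (omega_term \o (fun k : V => k.1.2)) + (omega_term \o (fun k : V => k.2))
  by [].
apply: continuousD; last by apply: term; exact: snd_continuous.
apply: continuousD; last exact: term.
by apply: continuousD; [exact: cst_continuous | exact: term].
Qed.

Lemma closed_eq_continuous (X : topologicalType) (f g : X -> R) :
  continuous f -> continuous g -> closed [set p | f p = g p].
Proof.
move=> fc gc.
have -> : [set p | f p = g p] = (f - g) @^-1` [set 0].
  apply/seteqP; split => p /=.
    by move=> fg; rewrite /GRing.add /= fg subrr.
  by move/eqP; rewrite subr_eq0 => /eqP.
apply: (continuous_closedP (f - g)).1; last exact: closed_eq.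
by move=> p; apply: continuousB; [exact: fc | exact: gc].
Qed.

Lemma closed_connected1 (X : topologicalType) (w0 : R) (u v : X -> V) :
  continuous u -> continuous v ->
  closed [set p | Defs.connected1 w0 (u p) (v p)].
Proof.
move=> uc vc.
have om (g : X -> V) : continuous g -> continuous (omega w0 \o g).
  by move=> gc p; apply: continuous_comp; [exact: gc | exact: omega_continuous].
have sum (g h : X -> V) : continuous g -> continuous h ->
    continuous (fun p => omega w0 (g p) + omega w0 (h p)).
  move=> gc hc p.
  have -> : (fun p => omega w0 (g p) + omega w0 (h p))
    = (omega w0 \o g) + (omega w0 \o h) by [].
  by apply: continuousD; exact: om.
have sub (g h : X -> V) : continuous g -> continuous h ->
    continuous (fun p => vsub (g p) (h p)).
  move=> gc hc p; have -> : (fun p => vsub (g p) (h p)) = g - h by [].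
  by apply: continuousB; [exact: gc | exact: hc].
have add : continuous (fun p => vadd (u p) (v p)).
  move=> p; have -> : (fun p => vadd (u p) (v p)) = u + v by [].
  by apply: continuousD; [exact: uc | exact: vc].
apply: closedU; [|apply: closedU]; apply: closed_eq_continuous.
- exact: om.
- by apply: sum => //; exact: sub.
- exact: om.
- by apply: sum => //; exact: sub.
- exact: om.
- exact: sum.
Qed.

Lemma vsubE (a b : V) : vsub a b = a - b. Proof. by []. Qed.
Lemma vaddE (a b : V) : vadd a b = a + b. Proof. by []. Qed.

Definition intvec (m : (int * int) * int) : V :=
  ((m.1.1%:~R, m.1.2%:~R), m.2%:~R).

Lemma cos_2pi_int (a : R) (n : int) :
  cos (2 * pi * (a + n%:~R)) = cos (2 * pi * a).
Proof.
have per := periodicn (@cosD2pi R).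
case: n => k.
  rewrite -(per k (2 * pi * a)); congr cos.
  by rewrite mulrDr -mulr_natr -mulr_natr /=; ring.
rewrite -(per k.+1 (2 * pi * (a + (Negz k)%:~R))); congr cos.
rewrite NegzE intrN -pmulrn mulrDr -mulr_natr -mulr_natr; ring.
Qed.

Lemma omega_shift (w0 : R) (k : V) m : omega w0 (k + intvec m) = omega w0 k.
Proof. by rewrite /omega /= !cos_2pi_int. Qed.

Lemma omega_shiftN (w0 : R) (k : V) m : omega w0 (k - intvec m) = omega w0 k.
Proof.
have -> : k - intvec m = k + intvec ((- m.1.1, - m.1.2), - m.2).
  by rewrite /intvec /= !intrN.
exact: omega_shift.
Qed.

Lemma connected1_shiftr (w0 : R) (a b : V) m :
  Defs.connected1 w0 a b -> Defs.connected1 w0 a (vsub b (intvec m)).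
Proof.
rewrite /Defs.connected1 !vsubE !vaddE.
have -> : b - intvec m - a = (b - a) - intvec m by rewrite addrAC.
have -> : a - (b - intvec m) = (a - b) + intvec m by rewrite opprB addrA addrAC.
have -> : a + (b - intvec m) = (a + b) - intvec m by rewrite addrA.
by rewrite !omega_shiftN omega_shift.
Qed.

Lemma connected1_shiftl (w0 : R) (a b : V) m :
  Defs.connected1 w0 a b -> Defs.connected1 w0 (vsub a (intvec m)) b.
Proof.
rewrite /Defs.connected1 !vsubE !vaddE.
have -> : b - (a - intvec m) = (b - a) + intvec m by rewrite opprB addrA addrAC.
have -> : a - intvec m - b = (a - b) - intvec m by rewrite addrAC.
have -> : a - intvec m + b = (a + b) - intvec m by rewrite addrAC.
by rewrite !omega_shiftN omega_shift.
Qed.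

Lemma Sn_shift (w0 : R) (x : V) n (z : V) m :
  Sn w0 x n z -> Sn w0 x n (vsub z (intvec m)).
Proof.
case: n => [|n] /=; first exact: connected1_shiftr.
by move=> [u Su Cuz]; exists u => //; apply: connected1_shiftr.
Qed.

Definition cube (k : R) : set V := (`[-k, k] `*` `[-k, k]) `*` `[-k, k].

Lemma cube_compact k : compact (cube k).
Proof.
by apply: compact_setX; [apply: compact_setX|]; exact: segment_compact.
Qed.

Lemma shift_into_cube (z : V) : exists m, cube 1 (vsub z (intvec m)).
Proof.
have red (t : R) : t - (Num.floor t)%:~R \in `[- 1, 1].
  have := floor_le t; have := floorD1_gt t; rewrite intrD => ? ?.
  by rewrite in_itv /=; apply/andP; split; lra.
exists ((Num.floor z.1.1, Num.floor z.1.2), Num.floor z.2).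
by split; [split|]; apply: red.
Qed.

Lemma Sn_cube_compact (w0 : R) (x : V) n (k : R) :
  compact (cube k `&` Sn w0 x n).
Proof.
elim: n k => [|n IH] k.
  apply: compact_closedI; first exact: cube_compact.
  exact: (@closed_connected1 V w0 (cst x) id (@cst_continuous _ _ x)
    (fun p => cvg_id)).
have -> : cube k `&` Sn w0 x n.+1 = snd @`
    (((cube 1 `&` Sn w0 x n) `*` cube k) `&`
     [set p | Defs.connected1 w0 p.1 p.2]).
  apply/seteqP; split; last first.
    by move=> y [[z y'] [[[_ Sz] ky'] C] <-]; split => //; exists z.
  move=> y [ky [z Sz Czy]].
  have [m zm] := shift_into_cube z.
  exists (vsub z (intvec m), y) => //.
  by split; [split; [split; [|exact: Sn_shift]|] | exact: connected1_shiftl].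
apply: continuous_compact; first exact/continuous_subspaceT/snd_continuous.
apply: compact_closedI; first exact: compact_setX (IH 1) (cube_compact k).
exact: closed_connected1 (@fst_continuous _ _) (@snd_continuous _ _).
Qed.

Lemma in_nat_cube (y : V) : exists j : nat, cube j%:R y.
Proof.
exists (Num.truncn (`|y.1.1| + `|y.1.2| + `|y.2|)).+1.
have := truncnS_gt (`|y.1.1| + `|y.1.2| + `|y.2|).
have := normr_ge0 y.1.1; have := normr_ge0 y.1.2; have := normr_ge0 y.2.
set N := _.+1%:R => ? ? ? ?.
by rewrite /cube /=; split; [split|]; rewrite in_itv /= -ler_norml; lra.
Qed.

(* S(x) is a countable union of compact sets, hence measurable. *)
Lemma Sinv_measurable (w0 : R) (x : V) : measurable (Sinv w0 x : set V).
Proof.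
have -> : (Sinv w0 x : set V) =
    \bigcup_n \bigcup_(j : nat) (cube j%:R `&` Sn w0 x n).
  apply/seteqP; split; last by move=> y [n _ [j _ [_ Sy]]]; exists n.
  move=> y [n _ Sy]; have [j jy] := in_nat_cube y.
  by exists n => //; exists j.
apply: bigcupT_measurable => n; apply: bigcupT_measurable => j.
apply: closed_measurable3; apply: compact_closed; first exact: norm_hausdorff.
exact: Sn_cube_compact.
Qed.

End CollisionRegion.

Theorem mainTheorem5 (R : realType) (w0 : R) (hw0 : 2 < w0 < 3) (x : vec R) :
  ~ noCollision w0 x -> lebesgue_measurable3 (Sinv w0 x).
Proof.
move=> _; exists (Sinv w0 x); split; first exact: Sinv_measurable.
by rewrite setDv setU0; exists set0; split.
Qed.
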